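(* Let $n\ge 2$ and $m=n-1$. Let $\overline{Q}_1\subseteq\mathbb{R}^{m^2}\times\mathbb{R}^{nm}$ be the set of all $(w,y)$, with $w=(w_{ir})_{i,r\in\{1,\dots,m\}}$ and $y=(y_{ij})$ indexed by ordered pairs $(i,j)$ of distinct elements of $C=\{0,1,\dots,m\}$, satisfying (1) $\sum_{r=1}^m w_{ir}=1$ for $i=1,\dots,m$; (2) $\sum_{i=1}^m w_{ir}=1$ for $r=1,\dots,m$; (3) $w_{ir}\ge 0$ for all $i,r\in\{1,\dots,m\}$; (4) $y_{0,i}-w_{i,1}=0$ for $i=1,\dots,m$; (5) $y_{i,0}-w_{i,m}=0$ for $i=1,\dots,m$; (6) $w_{ir}+w_{j,r+1}-y_{ij}\le 1$ for all $i,j\in\{1,\dots,m\}$ with $i\ne j$ and all $r\in\{1,\dots,m-1\}$; (7) $\sum_{i=1}^m\sum_{j=1,j\ne i}^m y_{ij}=m-1$; (8) $y_{ij}\ge 0$ for all distinct $i,j\in\{0,\dots,m\}$. Then $\overline{Q}_1$ is an extended formulation of $\mathcal{A}_n$, i.e. $\pi_w(\overline{Q}_1)=\{w: \exists y,\ (w,y)\in\overline{Q}_1\}=\mathcal{A}_n$.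
   Context: $\mathcal{A}_n$ denotes the linear assignment (Birkhoff) polytope in $\mathbb{R}^{m^2}$: the set of $w=(w_{ir})_{i,r=1}^m$ satisfying constraints (1)–(3). $\pi_w$ denotes projection onto the $w$-coordinates. *)

From mathcomp Require Import all_boot all_order all_algebra.
From mathcomp Require Import reals.
Set Implicit Arguments. Unset Strict Implicit. Unset Printing Implicit Defensive.
Import Order.TTheory GRing.Theory Num.Theory.
Local Open Scope ring_scope.

(* Conventions: n = m.+1.  Indices {1,...,m} of the paper are represented by
   'I_m (paper index i corresponds to ordinal with value i-1).
   The set C = {0,...,m} is represented by 'I_m.+1, with paper index k
   corresponding to the ordinal of value k; paper index i in {1..m} is
   thus [lift ord0 i] for i : 'I_m.  y is a function on all pairs of C;
   only off-diagonal entries are constrained (diagonal values are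
   meaningless coordinates and play no role). *)

Definition assignment_polytope (R : realType) (m : nat)
    (w : 'M[R]_m) : Prop :=
  [/\ (forall i : 'I_m, \sum_(r < m) w i r = 1),
      (forall r : 'I_m, \sum_(i < m) w i r = 1) &
      (forall i r : 'I_m, 0 <= w i r)].

Definition toC (m : nat) (i : 'I_m) : 'I_m.+1 := lift ord0 i.

Definition Q1bar (R : realType) (m : nat)
    (w : 'M[R]_m) (y : 'I_m.+1 -> 'I_m.+1 -> R) : Prop :=
  assignment_polytope w /\ [/\
      (forall i : 'I_m, forall r1 : 'I_m, val r1 = 0%N ->
          y ord0 (toC i) - w i r1 = 0),
      (forall i : 'I_m, forall rm : 'I_m, val rm = m.-1 ->
          y (toC i) ord0 - w i rm = 0),
      (forall i j : 'I_m, i != j -> forall r r' : 'I_m, val r' = (val r).+1 ->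
          w i r + w j r' - y (toC i) (toC j) <= 1),
      \sum_(i < m) \sum_(j < m | j != i) y (toC i) (toC j) = m.-1%:R &
      (forall k l : 'I_m.+1, k != l -> 0 <= y k l)].

From mathcomp Require Import all_boot all_order all_algebra.
From mathcomp Require Import reals.
From mathcomp Require Import lra.
Import Order.TTheory GRing.Theory Num.Theory.
Local Open Scope ring_scope.
Set Implicit Arguments.

(* For the converse, write m = k+1 and read a
   doubly stochastic w as a fractional assignment of items to positions.
   The "transition flow" L_ij = sum_r w_{i,r} w_{j,r+1} measures how often
   j directly follows i; its total mass is k = m-1, because the column sums
   of w are 1.  We take y_{0i} = w_{i,1}, y_{i0} = w_{i,m} and
   y_ij = L_ij for i <> j, except that the diagonal mass D = sum_i L_ii
   (which a y on distinct pairs cannot carry) is added to one fixed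
   off-diagonal pair, so that (7) holds.  Constraint (6) follows from
   a + b - 1 <= a b for a, b in [0,1], and (8) from nonnegativity of w. *)

Lemma addr_sub1_le_mul {R : realDomainType} (a b : R) :
  a <= 1 -> b <= 1 -> a + b - 1 <= a * b.
Proof.
move=> a_le1 b_le1.
have : 0 <= (1 - a) * (1 - b) by apply: mulr_ge0; rewrite subr_ge0.
by rewrite mulrBl !mulrBr !mul1r mulr1 => ?; lra.
Qed.

Section AssignmentEntries.
Variables (R : realType) (m : nat) (w : 'M[R]_m).
Hypothesis hw : assignment_polytope w.

Lemma assignment_ge0 i r : 0 <= w i r.
Proof. by case: hw. Qed.

Lemma assignment_le1 i r : w i r <= 1.
Proof.
case: hw => row_sum _ w_ge0; rewrite -(row_sum i) (bigD1 r) //= lerDl.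
by apply: sumr_ge0 => s _; apply: w_ge0.
Qed.

End AssignmentEntries.

Section Certificate.
Variables (R : realType) (k : nat) (w : 'M[R]_k.+1).

Definition flow (i j : 'I_k.+1) : R :=
  \sum_(r < k) w i (widen_ord (leqnSn k) r) * w j (lift ord0 r).

Definition diag_mass : R := \sum_(i < k.+1) flow i i.

(* The certificate y on C = {0,...,k+1}: index 0 is the depot, a
   nonzero index lift ord0 i stands for item i. *)
Definition certificate (a b : 'I_k.+2) : R :=
  match unlift ord0 a, unlift ord0 b with
  | None, Some j => w j ord0
  | Some i, None => w i ord_max
  | Some i, Some j => if i == j then 0 else
      flow i j + diag_mass * ((i == ord0) && (j == ord_max))%:R
  | None, None => 0
  end.

Lemma certificate_depot_item i : certificate ord0 (toC i) = w i ord0.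
Proof. by rewrite /certificate /toC unlift_none liftK. Qed.

Lemma certificate_item_depot i : certificate (toC i) ord0 = w i ord_max.
Proof. by rewrite /certificate /toC unlift_none liftK. Qed.

Lemma certificate_items i j : i != j ->
  certificate (toC i) (toC j) =
    flow i j + diag_mass * ((i == ord0) && (j == ord_max))%:R.
Proof. by move=> /negbTE neq_ij; rewrite /certificate /toC !liftK neq_ij. Qed.

(* The diagonal mass vanishes when there is a single item, so moving it
   to the pair (first, last) loses nothing even though that pair is then
   diagonal. *)
Lemma diag_mass_moved : diag_mass * (ord0 != ord_max :> 'I_k.+1)%:R = diag_mass.
Proof.
case: eqVneq => [eq0max | _]; last by rewrite mulr1.
have k0 : k = 0%N by move/(congr1 val): eq0max.
rewrite /diag_mass /flow big1 ?mul0r // => i _; apply: big1 => r _.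
by have := ltn_ord r; rewrite {2}k0.
Qed.

Lemma sum_pair_indicator :
  \sum_(i < k.+1) \sum_(j < k.+1 | j != i)
     ((i == ord0) && (j == ord_max))%:R = (ord0 != ord_max :> 'I_k.+1)%:R :> R.
Proof.
rewrite (bigD1 ord0) //= [X in _ + X]big1 ?addr0; last first.
  by move=> i /negbTE i_neq0; apply: big1 => j _; rewrite i_neq0.
case: (eqVneq (ord0 : 'I_k.+1) ord_max) => [eq0max | neq0max].
  by apply: big1 => j; rewrite -eq0max => /negbTE ->.
rewrite (bigD1 ord_max) 1?eq_sym //= eqxx [X in _ + X]big1 ?addr0 //.
by move=> j /andP [_ /negbTE ->].
Qed.

Hypothesis hw : assignment_polytope w.

Lemma flow_ge0 i j : 0 <= flow i j.
Proof. by apply: sumr_ge0 => r _; apply: mulr_ge0; apply: assignment_ge0. Qed.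

Lemma diag_mass_ge0 : 0 <= diag_mass.
Proof. by apply: sumr_ge0 => i _; apply: flow_ge0. Qed.

Lemma flow_ge_transition i j (r r' : 'I_k.+1) : val r' = (val r).+1 ->
  w i r * w j r' <= flow i j.
Proof.
move=> r'E; have r_lt_k : (val r < k)%N by rewrite -ltnS -r'E ltn_ord.
pose s := Ordinal r_lt_k.
have -> : r = widen_ord (leqnSn k) s by apply: val_inj.
have -> : r' = lift ord0 s by apply: val_inj; rewrite /= /bump /= r'E.
rewrite /flow (bigD1 s) //= lerDl; apply: sumr_ge0 => q _.
by apply: mulr_ge0; apply: assignment_ge0.
Qed.

(* Total flow: since every column of w sums to 1, each of the k
   transitions r -> r+1 carries mass exactly 1. *)
Lemma flow_total : \sum_(i < k.+1) \sum_(j < k.+1) flow i j = k%:R.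
Proof.
case: hw => _ col_sum _; rewrite /flow.
under eq_bigr => i _ do rewrite exchange_big /=.
rewrite exchange_big /=.
under eq_bigr => r _ do
  (under eq_bigr => i _ do rewrite -mulr_sumr; rewrite -mulr_suml !col_sum mulr1).
by rewrite sumr_const card_ord.
Qed.

Lemma flow_offdiag :
  \sum_(i < k.+1) \sum_(j < k.+1 | j != i) flow i j = k%:R - diag_mass.
Proof.
rewrite -flow_total /diag_mass -sumrB; apply: eq_bigr => i _.
by rewrite [in RHS](bigD1 i) //= addrC addrK.
Qed.

Lemma certificate_depot_out i (r1 : 'I_k.+1) : val r1 = 0%N ->
  certificate ord0 (toC i) - w i r1 = 0.
Proof.
by move=> r1E; rewrite certificate_depot_item (_ : r1 = ord0) ?subrr //; apply: val_inj.
Qed.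

Lemma certificate_depot_in i (rm : 'I_k.+1) : val rm = k ->
  certificate (toC i) ord0 - w i rm = 0.
Proof.
by move=> rmE; rewrite certificate_item_depot (_ : rm = ord_max) ?subrr //; apply: val_inj.
Qed.

Lemma certificate_transition i j : i != j -> forall r r' : 'I_k.+1,
  val r' = (val r).+1 -> w i r + w j r' - certificate (toC i) (toC j) <= 1.
Proof.
move=> neq_ij r r' r'E; rewrite certificate_items //.
have bound := addr_sub1_le_mul _ _ (assignment_le1 hw i r) (assignment_le1 hw j r').
have le_flow : w i r * w j r' <= flow i j by exact: flow_ge_transition.
have extra_ge0 : 0 <= diag_mass * ((i == ord0) && (j == ord_max))%:R.
  by apply: mulr_ge0; [exact: diag_mass_ge0 | rewrite ler0n].
lra.
Qed.

Lemma certificate_mass :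
  \sum_(i < k.+1) \sum_(j < k.+1 | j != i) certificate (toC i) (toC j) = k%:R.
Proof.
under eq_bigr => i _ do
  under eq_bigr => j j_neq_i do (rewrite certificate_items; last by rewrite eq_sym).
under eq_bigr => i _ do rewrite big_split /= -mulr_sumr.
rewrite big_split /= -mulr_sumr sum_pair_indicator diag_mass_moved flow_offdiag.
by rewrite subrK.
Qed.

Lemma certificate_ge0 a b : a != b -> 0 <= certificate a b.
Proof.
move=> neq_ab; rewrite /certificate.
case: (unlift ord0 a) => [i|]; case: (unlift ord0 b) => [j|] //;
  try exact: assignment_ge0.
case: eqP => // _; apply: addr_ge0; first exact: flow_ge0.
by apply: mulr_ge0; [exact: diag_mass_ge0 | rewrite ler0n].
Qed.

End Certificate.

Theorem lemma1 (R : realType) (m : nat) (hm : (1 <= m)%N) (w : 'M[R]_m) :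
  (exists y : 'I_m.+1 -> 'I_m.+1 -> R, Q1bar w y) <-> assignment_polytope w.
Proof.
split; first by case=> y [].
case: m hm w => // k _ w hw.
exists (@certificate R k w); split=> //; split.
- exact: certificate_depot_out.
- exact: certificate_depot_in.
- exact: certificate_transition.
- exact: certificate_mass.
- exact: certificate_ge0.
Qed.
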